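(* Consider the faulty-starter delivery problem described in the context, with finisher starting position $(x,y)\neq(0,0)$, $y\ge0$. The hybrid algorithm $\mathcal{H}$ described in the context is optimal: for every online algorithm $\mathcal{A}$, $\mathrm{CR}_{\mathcal{H}}\le\mathrm{CR}_{\mathcal{A}}$.
   Context: Setting. In the plane let $S=(0,0)$ and $T=(1,0)$. A ''starter'' drone carrying a package starts at $S$ at time $0$ and moves at unit speed along $\overline{ST}$ towards $T$. At an unknown time $t\in[0,1]$ it fails and stays forever at $(t,0)$ with the package (at time $s$ the package is at $(\min\{s,t\},0)$). A ''finisher'' drone starts at time $0$ at $P=(x,y)$ with $y\ge0$, moves at unit speed and can stop and turn instantaneously. The package can be handed over only when the drones are co-located; it is delivered at the first time the finisher, carrying the package, is at $T$. An online algorithm $\mathcal{A}$ specifies the finisher's trajectory using only $(x,y)$ (not $t$); $A(t)$ is its delivery time for fail time $t$. $\mathrm{Opt}(t)=\max\{1,\sqrt{(x-t)^2+y^2}+1-t\}$ is the optimal offline delivery time. $\mathrm{CR}_{\mathcal{A}}(t)=A(t)/\mathrm{Opt}(t)$ and $\mathrm{CR}_{\mathcal{A}}=\sup_{0\le t\le1}\mathrm{CR}_{\mathcal{A}}(t)$. Candidate algorithms. $\mathcal{A}_0$: the finisher goes straight to $S$, then along $\overline{ST}$ towards $T$ until it finds the package, then on to $T$. $\mathcal{A}_1$: the finisher goes straight to $T$, then along the segment towards $S$ until it finds the package, then returns to $T$. $\mathcal{A}_d$ (for $x>0$): with $d=(x^2+y^2)/(2x)$, the finisher goes straight to $(d,0)$,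 then towards $S$ along the segment until it finds the package, then goes to $T$. Hybrid algorithm $\mathcal{H}$: if $(x-1)^2+y^2>1$, execute $\mathcal{A}_0$ if $\mathrm{CR}_{\mathcal{A}_0}\le\mathrm{CR}_{\mathcal{A}_1}$ and $\mathcal{A}_1$ otherwise; if $(x-1)^2+y^2\le1$, execute $\mathcal{A}_0$ if $\mathrm{CR}_{\mathcal{A}_0}\le\mathrm{CR}_{\mathcal{A}_d}$ and $\mathcal{A}_d$ otherwise. *)

From HB Require Import structures.
From mathcomp Require Import all_boot all_order all_algebra.
From mathcomp Require Import all_classical all_reals all_analysis.
Set Implicit Arguments. Unset Strict Implicit. Unset Printing Implicit Defensive.
Import Order.TTheory GRing.Theory Num.Theory.
Local Open Scope ring_scope.
Local Open Scope classical_set_scope.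

Section FaultyStarter.
Variable R : realType.

Definition pt := (R * R)%type.

Definition dist (p q : pt) : R :=
  Num.sqrt ((p.1 - q.1) ^+ 2 + (p.2 - q.2) ^+ 2).

Definition ptS : pt := (0, 0).
Definition ptT : pt := (1, 0).

(* position of the package at time s when the starter fails at time t *)
Definition pkg (t s : R) : pt := (Num.min s t, 0).

Definition unit_speed (f : R -> pt) : Prop :=
  forall s1 s2, 0 <= s1 -> 0 <= s2 -> dist (f s1) (f s2) <= `|s1 - s2|.

(* An online algorithm: a search trajectory followed until the package is
   found (independent of t), and, for each pick-up time tau, the trajectory
   followed afterwards ([after tau r] = position at time tau + r).  The only
   information gained before delivery is the pick-up time (and hence the
   pick-up position [search tau]). *)
Record online_alg := OnlineAlg {
  search : R -> pt;
  after : R -> R -> pt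
}.

Definition valid_alg (P : pt) (A : online_alg) : Prop :=
  search A 0 = P /\ unit_speed (search A) /\
  forall tau, 0 <= tau -> after A tau 0 = search A tau /\ unit_speed (after A tau).

Definition is_pickup (g : R -> pt) (t s : R) : Prop :=
  [/\ 0 <= s, g s = pkg t s &
      forall s', 0 <= s' -> g s' = pkg t s' -> s <= s'].

(* delivery time A(t): first time after pick-up at which the finisher is at T;
   +oo if the package is never picked up or never delivered *)
Definition delivery (A : online_alg) (t : R) : \bar R :=
  ereal_inf [set e | exists s r, [/\ is_pickup (search A) t s, 0 <= r,
                                    after A s r = ptT & e = (s + r)%:E]].

Definition Opt (P : pt) (t : R) : R := Num.max 1 (dist P (t, 0) + 1 - t).

Definition cr (P : pt) (A : online_alg) : \bar R :=
  ereal_sup [set (delivery A t * ((Opt P t)^-1)%:E)%E | t in [set t : R | 0 <= t <= 1]].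

Definition seg (p q : pt) (r : R) : pt :=
  if r <= dist p q then
    (p.1 + r / dist p q * (q.1 - p.1), p.2 + r / dist p q * (q.2 - p.2))
  else q.

Definition leg2 (p q z : pt) (s : R) : pt :=
  if s <= dist p q then seg p q s else seg q z (s - dist p q).

Definition to_T (g : R -> pt) : R -> R -> pt := fun tau r => seg (g tau) ptT r.

Definition alg0 (P : pt) : online_alg :=
  OnlineAlg (leg2 P ptS ptT) (to_T (leg2 P ptS ptT)).
Definition alg1 (P : pt) : online_alg :=
  OnlineAlg (leg2 P ptT ptS) (to_T (leg2 P ptT ptS)).
Definition dpoint (P : pt) : R := (P.1 ^+ 2 + P.2 ^+ 2) / (2 * P.1).
Definition algd (P : pt) : online_alg :=
  OnlineAlg (leg2 P (dpoint P, 0) ptS) (to_T (leg2 P (dpoint P, 0) ptS)).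

Definition hybrid (P : pt) : online_alg :=
  if 1 < (P.1 - 1) ^+ 2 + P.2 ^+ 2 then
    (if (cr P (alg0 P) <= cr P (alg1 P))%E then alg0 P else alg1 P)
  else
    (if (cr P (alg0 P) <= cr P (algd P))%E then alg0 P else algd P).

End FaultyStarter.

From HB Require Import structures.
From mathcomp Require Import all_boot all_order all_algebra.
From mathcomp Require Import all_classical all_reals all_analysis.
From mathcomp Require Import ring lra.
Import Order.TTheory GRing.Theory Num.Theory.
Local Open Scope ring_scope.
Set Implicit Arguments.
Unset Strict Implicit.

(* Write [dP u] for the distance from P to [(u, 0)].  A_0 always delivers by
   time [dP 0 + 1], while any algorithm has ratio at least A(1) / Opt(1); so an
   algorithm beating A_0 picks up the package of a starter failing at [t = 1]
   at some time [s1 < dP 0 + 1], and in particular never visits S before [s1].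
   If that pick-up is at T, a starter failing at a point [u] not visited before
   [s1] costs [s1 + 2 (1 - u)]; as [(1 - u) / Opt u] decreases in [u], the
   ratio forced at an unvisited [u <= t] just below the visited points
   dominates the ratio of A_1 at [t] (P far from T) or of A_d (P near T).
   Otherwise P is near T and the pick-up is at a point [s1 >= d] of the
   segment, so a starter failing at [t < d] makes the finisher come back from
   [s1] to [t], which again dominates the ratio of A_d. *)

Section RealFacts.
Variable R : realType.
Local Open Scope classical_set_scope.
Implicit Types a b t N Kt Ku : R.

Lemma le_of_sqr_le a b : 0 <= b -> a ^+ 2 <= b ^+ 2 -> a <= b.
Proof. move=> b0 h; nra. Qed.

Lemma lt_of_sqr_lt a b : 0 <= b -> a ^+ 2 < b ^+ 2 -> a < b.
Proof. move=> b0 h; nra. Qed.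

Lemma min_lipschitz a b t : `|Num.min a t - Num.min b t| <= `|a - b|.
Proof.
have ab := ler_norm (a - b); have ba := ler_norm (b - a); rewrite distrC in ba.
rewrite ler_norml.
by case: (lerP a t) => h1; case: (lerP b t) => h2;
  rewrite ?(min_l h1) ?(min_r (ltW h1)) ?(min_l h2) ?(min_r (ltW h2));
  apply/andP; split; lra.
Qed.

Lemma div_le_shift N a b Kt Ku : 0 < Kt -> 0 < Ku ->
  N <= Kt + a -> a * Ku <= b * Kt -> N / Kt <= (Ku + b) / Ku.
Proof.
move=> Kt0 Ku0 NK ab; rewrite ler_pdivrMr // mulrAC ler_pdivlMr //.
have : N * Ku <= (Kt + a) * Ku by rewrite ler_wpM2r // ltW.
nra.
Qed.

(* [u] is taken just below [inf V], or [0]. *)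
Lemma exists_notin_near (V : set R) t e : 0 < e -> (forall w, V w -> 0 <= w) ->
  ~ V 0 -> V t -> exists u w, [/\ 0 <= u <= t, ~ V u, V w & u <= w <= u + e].
Proof.
move=> e0 V_ge0 notV0 Vt.
have infV : has_inf V by split; [exists t | exists 0].
have infV_le w : V w -> inf V <= w by move=> Vw; exact: (ge_inf (proj2 infV)).
have inf_ge0 : 0 <= inf V by apply: lb_le_inf; [exists t | exact: V_ge0].
have e2 : 0 < e / 2 by rewrite divr_gt0.
have [w Vw lt_w] := inf_adherent e2 infV.
have inf_le_t := infV_le _ Vt.
have [le0|gt0] := lerP (inf V - e / 2) 0.
  exists 0, w; split=> //; first by rewrite lexx (le_trans inf_ge0).
  by rewrite V_ge0 //=; lra.
have := infV_le _ Vw => inf_le_w.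
exists (inf V - e / 2), w; split=> //; try by apply/andP; split; lra.
by move/infV_le; lra.
Qed.

End RealFacts.

Section Plane.
Variable R : realType.
Implicit Types (p q z : pt R) (a b e : R).

Lemma dist_ge0 p q : 0 <= dist p q.
Proof. exact: sqrtr_ge0. Qed.

Lemma dist_sqr p q : dist p q ^+ 2 = (p.1 - q.1) ^+ 2 + (p.2 - q.2) ^+ 2.
Proof. by rewrite sqr_sqrtr // addr_ge0 // sqr_ge0. Qed.

Lemma dist_le_sqr p q e : 0 <= e ->
  (p.1 - q.1) ^+ 2 + (p.2 - q.2) ^+ 2 <= e ^+ 2 -> dist p q <= e.
Proof. by rewrite -dist_sqr; exact: le_of_sqr_le. Qed.

Lemma distC p q : dist p q = dist q p.
Proof. by rewrite /dist -(sqrrN (p.1 - q.1)) -(sqrrN (p.2 - q.2)) !opprB. Qed.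

Lemma dist_triangle p q z : dist p z <= dist p q + dist q z.
Proof.
apply: dist_le_sqr; first by rewrite addr_ge0 ?dist_ge0.
have pq := dist_sqr p q; have qz := dist_sqr q z.
set u1 := p.1 - q.1 in pq *; set u2 := p.2 - q.2 in pq *.
set v1 := q.1 - z.1 in qz *; set v2 := q.2 - z.2 in qz *.
have -> : p.1 - z.1 = u1 + v1 by rewrite /u1 /v1; ring.
have -> : p.2 - z.2 = u2 + v2 by rewrite /u2 /v2; ring.
have pqz : 0 <= dist p q * dist q z by rewrite mulr_ge0 ?dist_ge0.
(* Cauchy-Schwarz, via Lagrange's identity *)
have CS : (u1 * v1 + u2 * v2) ^+ 2 <= (dist p q * dist q z) ^+ 2.
  rewrite exprMn pq qz; have := sqr_ge0 (u1 * v2 - u2 * v1); nra.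
have := le_of_sqr_le pqz CS; nra.
Qed.

Lemma dist_axis a b : dist (a, 0) (b, 0) = `|a - b|.
Proof. by rewrite /dist /= subrr expr0n /= addr0 sqrtr_sqr. Qed.

Lemma dist_eq0 p q : dist p q = 0 -> p = q.
Proof.
move=> pq0; have := dist_sqr p q; rewrite pq0 expr0n /= => h.
have := sqr_ge0 (p.1 - q.1); have := sqr_ge0 (p.2 - q.2) => h2 h1.
have e1 : p.1 = q.1 by nra.
have e2 : p.2 = q.2 by nra.
by case: p q e1 e2 {pq0 h h1 h2} => a b [c d] /= -> ->.
Qed.

Lemma dist_xx p : dist p p = 0.
Proof. by rewrite /dist !subrr expr0n /= addr0 sqrtr0. Qed.

End Plane.

Section Motion.
Variable R : realType.
Implicit Types (p q z : pt R) (g : R -> pt R) (t s r al be : R).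

Lemma pkg_le t s : s <= t -> pkg t s = (s, 0).
Proof. by move=> st; rewrite /pkg min_l. Qed.

Lemma pkg_ge t s : t <= s -> pkg t s = (t, 0).
Proof. by move=> ts; rewrite /pkg min_r. Qed.

Lemma dist_pkg t s s' : dist (pkg t s) (pkg t s') <= `|s - s'|.
Proof. by rewrite dist_axis; exact: min_lipschitz. Qed.

Lemma unit_speed_from g s : unit_speed g -> 0 <= s -> dist (g 0) (g s) <= s.
Proof. by move=> ug s0; have := ug 0 s (lexx 0) s0; rewrite sub0r normrN ger0_norm. Qed.

Definition interp p q al : pt R := (p.1 + al * (q.1 - p.1), p.2 + al * (q.2 - p.2)).

Lemma dist_interp p q al be :
  dist (interp p q al) (interp p q be) <= `|al - be| * dist p q.
Proof.
apply: dist_le_sqr; first by rewrite mulr_ge0 ?dist_ge0.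
rewrite exprMn (distC p q) dist_sqr real_normK ?num_real //=.
have -> : p.1 + al * (q.1 - p.1) - (p.1 + be * (q.1 - p.1)) = (al - be) * (q.1 - p.1)
  by ring.
have -> : p.2 + al * (q.2 - p.2) - (p.2 + be * (q.2 - p.2)) = (al - be) * (q.2 - p.2)
  by ring.
by rewrite !exprMn mulrDr.
Qed.

Lemma seg_interp p q r : 0 < dist p q ->
  seg p q r = interp p q (Num.min r (dist p q) / dist p q).
Proof.
move=> pq0; rewrite /seg /interp; have [//|_] := lerP r (dist p q).
by rewrite divff ?gt_eqF // !mul1r; case: q {pq0} => a b /=; congr (_, _); ring.
Qed.

Lemma seg_degenerate p q r : dist p q = 0 -> seg p q r = p.
Proof.
move=> pq0; rewrite /seg pq0 invr0 !mulr0 !mul0r !addr0.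
by case: ifP => _; [case: p {pq0} | rewrite (dist_eq0 pq0)].
Qed.

Lemma unit_speed_seg p q : unit_speed (seg p q).
Proof.
move=> r1 r2 r10 r20; have := dist_ge0 p q; rewrite le_eqVlt => /orP[/eqP/esym pq0|pq0].
  by rewrite !seg_degenerate // dist_xx.
rewrite !seg_interp //; apply: le_trans (dist_interp _ _ _ _) _.
rewrite -mulrBl normrM (gtr0_norm (_ : 0 < (dist p q)^-1)) ?invr_gt0 //.
by rewrite -mulrA mulVf ?gt_eqF // mulr1; exact: min_lipschitz.
Qed.

Lemma seg0 p q : seg p q 0 = p.
Proof. by rewrite /seg dist_ge0 !mul0r !addr0; case: p. Qed.

Lemma seg_dist p q : seg p q (dist p q) = q.
Proof.
have := dist_ge0 p q; rewrite le_eqVlt => /orP[/eqP pq0|pq0].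
  by rewrite seg_degenerate // (dist_eq0 (esym pq0)).
rewrite seg_interp // min_l // divff ?gt_eqF // /interp.
by case: q {pq0} => a b /=; congr (_, _); ring.
Qed.

Lemma dist_seg_start p q r : 0 <= r -> dist p (seg p q r) <= r.
Proof. by rewrite -{1}(seg0 p q); exact: unit_speed_from (unit_speed_seg p q). Qed.

Lemma dist_seg_end p q r : 0 <= r -> r <= dist p q ->
  dist (seg p q r) q <= dist p q - r.
Proof.
move=> r0 rpq; rewrite -{2}(seg_dist p q).
by have := unit_speed_seg p q r0 (dist_ge0 p q); rewrite distrC ger0_norm ?subr_ge0.
Qed.

Lemma leg2_le p q z s : s <= dist p q -> leg2 p q z s = seg p q s.
Proof. by move=> spq; rewrite /leg2 spq. Qed.

Lemma leg2_ge p q z s : dist p q <= s -> leg2 p q z s = seg q z (s - dist p q).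
Proof.
rewrite /leg2 le_eqVlt => /orP[/eqP <-|pqs]; first by rewrite lexx seg_dist subrr seg0.
by rewrite leNgt pqs.
Qed.

Lemma unit_speed_leg2 p q z : unit_speed (leg2 p q z).
Proof.
have le_forward s1 s2 : 0 <= s1 -> s1 <= s2 ->
    dist (leg2 p q z s1) (leg2 p q z s2) <= s2 - s1.
  move=> s10 s12; set L := dist p q; have L0 : 0 <= L := dist_ge0 p q.
  have [s1L|Ls1] := lerP s1 L; have [s2L|Ls2] := lerP s2 L.
  - rewrite !leg2_le //; have := unit_speed_seg p q s10 (le_trans s10 s12).
    by rewrite distrC ger0_norm ?subr_ge0.
  - rewrite (leg2_le _ s1L) (leg2_ge _ (ltW Ls2)) -/L.
    have := dist_triangle (seg p q s1) q (seg q z (s2 - L)).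
    have := dist_seg_end s10 s1L; have := @dist_seg_start q z (s2 - L).
    rewrite -/L; lra.
  - lra.
  - rewrite (leg2_ge _ (ltW Ls1)) (leg2_ge _ (ltW Ls2)) -/L.
    have := @unit_speed_seg q z (s1 - L) (s2 - L); rewrite distrC.
    have -> : s2 - L - (s1 - L) = s2 - s1 by ring.
    rewrite ger0_norm ?subr_ge0 //; apply; lra.
move=> s1 s2 s10 s20; have [s12|s21] := lerP s1 s2; first exact: le_forward.
by rewrite distC; apply: le_forward => //; exact: ltW.
Qed.

End Motion.

Section Delivery.
Variable R : realType.
Implicit Types (g : R -> pt R) (A : online_alg R) (P : pt R) (t s r L B : R).
Local Open Scope classical_set_scope.

(* The meeting times form a closed set, because both the finisher and the
   package move at speed at most 1; its infimum is the first meeting. *)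
Lemma exists_pickup g t s0 : unit_speed g -> 0 <= s0 -> g s0 = pkg t s0 ->
  exists2 s, is_pickup g t s & s <= s0.
Proof.
move=> ug s00 meet0.
pose M := [set s : R | 0 <= s /\ g s = pkg t s].
have infM : has_inf M by split; [exists s0 | exists 0 => s []].
have m0 : 0 <= inf M by apply: lb_le_inf; [exists s0 | move=> s []].
have infM_le s : M s -> inf M <= s by move=> Ms; exact: (ge_inf (proj2 infM)).
have meet_inf : g (inf M) = pkg t (inf M).
  apply: dist_eq0; apply/eqP; rewrite eq_le dist_ge0 andbT.
  apply/ler_addgt0Pr => e e0.
  have e2 : 0 < e / 2 by rewrite divr_gt0.
  have [s [s_ge0 meet] lt_s] := inf_adherent e2 infM.
  have ms : inf M <= s by exact: infM_le.
  have := ug _ _ m0 s_ge0; have := dist_pkg t s (inf M).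
  have := dist_triangle (g (inf M)) (g s) (pkg t (inf M)).
  rewrite meet (distrC (inf M)) ger0_norm ?subr_ge0 //; lra.
exists (inf M); last exact: infM_le.
by split=> // s s_ge0 meet; apply: infM_le.
Qed.

Lemma pickup_after g t s : is_pickup g t s -> t <= s -> g s = (t, 0).
Proof. by case=> _ meet _ ts; rewrite meet pkg_ge. Qed.

Lemma pickup_before g t s : is_pickup g t s -> s <= t -> g s = (s, 0).
Proof. by case=> _ meet _ st; rewrite meet pkg_le. Qed.

(* A meeting before the fail time [t] is a meeting for every later fail time. *)
Lemma pickup_early g t t' s s' :
  is_pickup g t' s' -> is_pickup g t s -> t <= t' -> s < t -> s' <= s.
Proof.
move=> [_ _ first'] [s0 meet _] tt' st; apply: first' => //.
by rewrite meet !pkg_le // ltW // (lt_le_trans st).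
Qed.

Lemma pickup_at_T g s : is_pickup g 1 s -> g s = ptT R -> 1 <= s.
Proof.
case=> _ meet _ atT; rewrite leNgt; apply/negP => s1.
by move: meet; rewrite atT (pkg_le (ltW s1)) => -[s_eq]; move: s1; rewrite -s_eq ltxx.
Qed.

Lemma Opt_ge1 P t : 1 <= Opt P t.
Proof. by rewrite /Opt le_max lexx. Qed.

Lemma Opt_gt0 P t : 0 < Opt P t.
Proof. exact: lt_le_trans ltr01 (Opt_ge1 P t). Qed.

Lemma delivery_le A t s r : is_pickup (search A) t s -> 0 <= r ->
  after A s r = ptT R -> (delivery A t <= (s + r)%:E)%E.
Proof. by move=> pick r0 atT; apply: ereal_inf_lbound; exists s, r. Qed.

Lemma delivery_ge A t L : (forall s r, is_pickup (search A) t s -> 0 <= r ->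
  after A s r = ptT R -> L <= s + r) -> (L%:E <= delivery A t)%E.
Proof.
move=> bound; apply/ereal_infP => _ [s [r [pick r0 atT ->]]].
by rewrite lee_fin; exact: bound.
Qed.

Lemma delivery_to_T_le g t s0 B : unit_speed g -> 0 <= s0 -> g s0 = pkg t s0 ->
  (forall s, 0 <= s -> s <= s0 -> s + dist (g s) (ptT R) <= B) ->
  (delivery (OnlineAlg g (to_T g)) t <= B%:E)%E.
Proof.
move=> ug s00 meet0 bound; have [s pick ss0] := exists_pickup ug s00 meet0.
have [s_ge0 _ _] := pick.
have := @delivery_le (OnlineAlg g (to_T g)) t s _ pick (dist_ge0 _ _) (seg_dist _ _).
by move/le_trans; apply; rewrite lee_fin; exact: bound.
Qed.

Lemma cr_ge P A t L : 0 <= t <= 1 -> (L%:E <= delivery A t)%E ->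
  ((L / Opt P t)%:E <= cr P A)%E.
Proof.
move=> t01 LA; apply: le_trans (ereal_sup_ubound _); last by exists t.
by rewrite EFinM lee_wpmul2r // lee_fin invr_ge0 ltW ?Opt_gt0.
Qed.

Lemma cr_le P A (M : \bar R) : (forall t, 0 <= t <= 1 ->
    exists2 B, (delivery A t <= B%:E)%E & ((B / Opt P t)%:E <= M)%E) ->
  (cr P A <= M)%E.
Proof.
move=> bound; apply: ge_ereal_sup => _ [t t01 <-].
have [B AB BM] := bound t t01; apply: le_trans BM.
by rewrite EFinM lee_wpmul2r // lee_fin invr_ge0 ltW ?Opt_gt0.
Qed.

End Delivery.

Section Geometry.
Variables (R : realType) (x y : R).
Implicit Types u t w : R.
Local Notation P := ((x, y) : pt R).

Definition dP u := dist P (u, 0).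

Lemma dP_ge0 u : 0 <= dP u.
Proof. exact: dist_ge0. Qed.

Lemma dP_sqr u : dP u ^+ 2 = (x - u) ^+ 2 + y ^+ 2.
Proof. by rewrite /dP dist_sqr /= subr0. Qed.

Lemma dP_lipschitz u w : dP w <= dP u + `|w - u|.
Proof. by have := dist_triangle P (u, 0) (w, 0); rewrite dist_axis distrC. Qed.

Lemma norm2_gt0 : P != (0, 0) -> 0 < x ^+ 2 + y ^+ 2.
Proof.
move=> P_neq0; rewrite lt_def addr_ge0 ?sqr_ge0 // andbT paddr_eq0 ?sqr_ge0 //.
by rewrite !sqrf_eq0; apply: contra P_neq0 => /andP[/eqP-> /eqP->].
Qed.

Lemma Opt_eq u : u <= dP u -> Opt P u = dP u + 1 - u.
Proof. by move=> u_le; rewrite /Opt -/(dP u) max_r //; lra. Qed.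

Lemma Opt1 : Opt P 1 = Num.max 1 (dP 1).
Proof. by rewrite /Opt addrK. Qed.

Lemma Opt_ge_Opt1 u : 0 <= u -> u <= 1 -> Opt P 1 <= Opt P u.
Proof.
move=> u0 u1; have := dP_lipschitz u 1; rewrite ger0_norm ?subr_ge0 // => lip.
by rewrite Opt1 /Opt -/(dP u) ge_max !le_max lexx /=; apply/orP; right; lra.
Qed.

Section Far.
Hypothesis P_far : 1 < (x - 1) ^+ 2 + y ^+ 2.

Lemma lt_dP_far u : 0 <= u -> u <= 1 -> u < dP u.
Proof.
move=> u0 u1; apply: lt_of_sqr_lt; first exact: dP_ge0.
have n0 : 0 < x ^+ 2 + y ^+ 2.
  apply: norm2_gt0; apply: contraTneq P_far => -[-> ->].
  by rewrite sub0r sqrrN expr0n /= addr0 expr1n ltxx.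
rewrite dP_sqr; have [u_lt1|u_ge1] := ltrP u 1; last first.
  have -> : u = 1 by lra.
  by rewrite expr1n.
have : 0 < (1 - u) * (x ^+ 2 + y ^+ 2) by rewrite mulr_gt0 // subr_gt0.
have : 0 <= u * ((x - 1) ^+ 2 + y ^+ 2 - 1) by rewrite mulr_ge0 // subr_ge0 ltW.
nra.
Qed.

Lemma dP1_gt1_far : 1 < dP 1.
Proof. by apply: lt_of_sqr_lt; [exact: dP_ge0 | rewrite dP_sqr expr1n]. Qed.

Lemma dP_cross_far u t : 0 <= u -> u <= t -> t <= 1 ->
  (1 - t) * dP u <= (1 - u) * dP t.
Proof.
move=> u0 ut t1; have q1 := dP1_gt1_far; have q2 := dP_sqr 1.
set a := 1 - u; set b := 1 - t.
have a0 : 0 <= a by rewrite /a; lra.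
have b0 : 0 <= b by rewrite /b; lra.
have ba : b <= a by rewrite /a /b; lra.
have a1 : a <= 1 by rewrite /a; lra.
have hab : 2 * a * b <= a + b by nra.
have x1 : `|x - 1| <= dP 1.
  by apply: le_of_sqr_le; rewrite ?dP_ge0 // real_normK ?num_real // q2; nra.
move: x1; rewrite ler_norml => /andP[x1l x1r].
have key : 0 <= (a + b) * ((x - 1) ^+ 2 + y ^+ 2) + 2 * a * b * (x - 1).
  rewrite -q2.
  have : 0 <= dP 1 * ((a + b) * dP 1 - 2 * a * b) by apply: mulr_ge0; nra.
  have : 0 <= (a * b) * (x - 1 + dP 1) by apply: mulr_ge0; [exact: mulr_ge0|lra].
  nra.
apply: le_of_sqr_le; first by apply: mulr_ge0 => //; exact: dP_ge0.
rewrite !exprMn !dP_sqr.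
have -> : x - t = (x - 1) + b by rewrite /b; ring.
have -> : x - u = (x - 1) + a by rewrite /a; ring.
have : 0 <= (a - b) * ((a + b) * ((x - 1) ^+ 2 + y ^+ 2) + 2 * a * b * (x - 1)).
  by apply: mulr_ge0 => //; lra.
nra.
Qed.

Lemma ratio_le_far u t : 0 <= u -> u <= t -> t <= 1 ->
  (dP 1 + 2 - 2 * t) / Opt P t <= (dP u + 1 - u + 2 * (1 - u)) / Opt P u.
Proof.
move=> u0 ut t1; have u1 := le_trans ut t1; have t0 := le_trans u0 ut.
have tD := lt_dP_far t0 t1; have uD := lt_dP_far u0 u1.
rewrite (Opt_eq (ltW tD)) (Opt_eq (ltW uD)).
apply: (div_le_shift (a := 2 * (1 - t))); try lra.
  by have := dP_lipschitz t 1; rewrite ger0_norm ?subr_ge0 //; lra.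
have := dP_cross_far u0 ut t1; nra.
Qed.

End Far.

Section Near.
Hypotheses (P_neq0 : P != (0, 0)) (P_near : (x - 1) ^+ 2 + y ^+ 2 <= 1).
Local Notation d := (dpoint P).

Lemma x_gt0_near : 0 < x.
Proof. have := norm2_gt0 P_neq0; have := P_near; nra. Qed.

Lemma dpointE : 2 * x * d = x ^+ 2 + y ^+ 2.
Proof.
by rewrite /dpoint /= mulrC -mulrA mulVf ?mulr1 // mulf_neq0 ?gt_eqF ?x_gt0_near.
Qed.

Lemma dpoint_gt0 : 0 < d.
Proof. have := norm2_gt0 P_neq0; have := x_gt0_near; have := dpointE; nra. Qed.

Lemma dpoint_le1 : d <= 1.
Proof. have := P_near; have := x_gt0_near; have := dpointE; nra. Qed.

Lemma dP_sqr_near u : dP u ^+ 2 = 2 * x * (d - u) + u ^+ 2.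
Proof. rewrite dP_sqr; have := dpointE; nra. Qed.

Lemma dP_dpoint : dP d = d.
Proof.
have := dP_sqr_near d; rewrite subrr mulr0 add0r => e.
have := dP_ge0 d; have := dpoint_gt0; nra.
Qed.

Lemma lt_dP_near u : 0 <= u -> u < d -> u < dP u.
Proof.
move=> u0 ud; apply: lt_of_sqr_lt; first exact: dP_ge0.
rewrite dP_sqr_near; have : 0 < x * (d - u) by rewrite mulr_gt0 ?x_gt0_near ?subr_gt0.
nra.
Qed.

Lemma dpoint_le_near u : 0 <= u -> dP u <= u -> d <= u.
Proof. by move=> u0; apply: contraTT; rewrite -!ltNge; exact: lt_dP_near. Qed.

Lemma dP_cross_near u t : 0 <= u -> u <= t -> t <= d ->
  (d - t) * dP u <= (1 - u) * dP t.
Proof.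
move=> u0 ut td; have d1 := dpoint_le1; have x0 := x_gt0_near.
apply: le_of_sqr_le; first by apply: mulr_ge0; [lra | exact: dP_ge0].
rewrite !exprMn !dP_sqr_near.
set al := d - t; set de := t - u.
have al0 : 0 <= al by rewrite /al; lra.
have de0 : 0 <= de by rewrite /de; lra.
have -> : d - u = al + de by rewrite /al /de; ring.
have de_le : al + de <= 1 - u by rewrite /al /de; lra.
have : (al + de) ^+ 2 * (2 * x * al + t ^+ 2) <= (1 - u) ^+ 2 * (2 * x * al + t ^+ 2).
  by apply: ler_wpM2r; [rewrite addr_ge0 ?sqr_ge0 // !mulr_ge0 // ltW | nra].
have := mulr_ge0 (mulr_ge0 (mulr_ge0 (ltW x0) al0) de0) (addr_ge0 al0 de0).
have : al * u <= (al + de) * t by nra.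
have : 0 <= al * u by rewrite mulr_ge0.
nra.
Qed.

Lemma ratio_le_near u t : 0 <= u -> u <= t -> t < d ->
  (2 * d + 1 - 2 * t) / Opt P t <= (dP u + 1 - u + 2 * (1 - u)) / Opt P u.
Proof.
move=> u0 ut td; have ud := le_lt_trans ut td; have t0 := le_trans u0 ut.
have d1 := dpoint_le1; have tD := lt_dP_near t0 td; have uD := lt_dP_near u0 ud.
rewrite (Opt_eq (ltW tD)) (Opt_eq (ltW uD)).
apply: (div_le_shift (a := 2 * (d - t))); try lra.
have := dP_cross_near u0 ut (ltW td).
have : (d - t) * (1 - u) <= (1 - u) * (1 - t) by rewrite mulrC ler_wpM2l; lra.
nra.
Qed.

End Near.
End Geometry.

Definition visited_before (R : realType) (g : R -> pt R) (s1 w : R) : Prop :=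
  exists2 s, 0 <= s < s1 & g s = (w, 0).

Section LowerBounds.
Variables (R : realType) (x y : R) (A : online_alg R).
Hypothesis A_valid : valid_alg (x, y) A.
Implicit Types t u w s L : R.
Local Notation P := ((x, y) : pt R).
Local Notation g := (search A).
Local Notation T := (ptT R).
Local Notation dP := (dP x y).
Local Open Scope classical_set_scope.

Lemma unit_speed_search : unit_speed g.
Proof. by case: A_valid => _ []. Qed.

Lemma dist_search s : 0 <= s -> dist P (g s) <= s.
Proof. by case: A_valid => <- [ug _]; exact: unit_speed_from. Qed.

Lemma delivery_ge_search t L :
  (forall s, is_pickup g t s -> L <= s + dist (g s) T) -> (L%:E <= delivery A t)%E.
Proof.
move=> bound; apply: delivery_ge => s r pick r0 atT; have [s0 _ _] := pick.
have [after0 ua] := (proj2 (proj2 A_valid)) s s0.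
have := unit_speed_from ua r0; rewrite after0 atT.
by have := bound s pick; lra.
Qed.

Lemma cr_ge_search t L : 0 <= t <= 1 ->
  (forall s, is_pickup g t s -> L <= s + dist (g s) T) -> ((L / Opt P t)%:E <= cr P A)%E.
Proof. by move=> t01 bound; apply: cr_ge t01 (delivery_ge_search bound). Qed.

Lemma cr_ge1 : (1%:E <= cr P A)%E.
Proof.
rewrite -(@divff _ (Opt P 1)) ?gt_eqF ?Opt_gt0 //; apply: cr_ge_search => [|s pick].
  by rewrite ler01 lexx.
have [s0 _ _] := pick; rewrite Opt1 ge_max; apply/andP; split.
  have [s_ge1|s_lt1] := lerP 1 s.
    by rewrite (pickup_after pick s_ge1) dist_xx addr0.
  by rewrite (pickup_before pick (ltW s_lt1)) dist_axis distrC ger0_norm; lra.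
by have := dist_search s0; have := dist_triangle P (g s) T; rewrite /dP; lra.
Qed.

Variable s1 : R.
Hypothesis pick1 : is_pickup g 1 s1.
Local Notation visited := (visited_before g s1).

Section PickupAtT.
Hypotheses (atT : g s1 = T) (fast : s1 < dP 0 + 1).

Lemma visited_before_T w : visited w -> w <= 1 -> dP w + 1 - w <= s1.
Proof.
move=> [s /andP[s0 ss1] gs] w1; have [s10 _ _] := pick1.
have := dist_search s0; have := unit_speed_search s0 s10.
rewrite gs atT dist_axis /dP (distrC s) (distrC w) !ger0_norm; lra.
Qed.

Lemma unvisited_origin : ~ visited 0.
Proof.
by move=> /visited_before_T; rewrite ler01 subr0 => /(_ isT); have := fast; lra.
Qed.

Lemma pickup_unvisited u s : 0 <= u -> u < 1 -> ~ visited u ->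
  is_pickup g u s -> s1 + 1 - u <= s.
Proof.
move=> u0 u1 unvisited pick; have [s0 meet _] := pick; have [s10 _ _] := pick1.
have s1_ge1 := pickup_at_T pick1 atT.
have us : u <= s.
  by rewrite leNgt; apply/negP => su; have := pickup_early pick1 pick (ltW u1) su; lra.
have gs := pickup_after pick us.
have s1s : s1 < s.
  rewrite ltNge le_eqVlt; apply/negP => /orP[/eqP ss1|ss1].
    by move: gs; rewrite ss1 atT => -[u_eq]; move: u1; rewrite u_eq ltxx.
  by apply: unvisited; exists s; rewrite ?s0.
have := unit_speed_search s10 s0; rewrite atT gs dist_axis.
by rewrite (distrC s1) !ger0_norm; lra.
Qed.

Lemma cr_ge_unvisited u : 0 <= u -> u < 1 -> ~ visited u ->
  (((s1 + 2 - 2 * u) / Opt P u)%:E <= cr P A)%E.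
Proof.
move=> u0 u1 unvisited; apply: cr_ge_search => [|s pick]; first by rewrite u0 ltW.
have s_ge := pickup_unvisited u0 u1 unvisited pick.
have us : u <= s by have := pickup_at_T pick1 atT; lra.
by rewrite (pickup_after pick us) dist_axis distrC ger0_norm; lra.
Qed.

(* If [t] was visited before [s1], pick an unvisited [u <= t] just below a
   visited [w]: failing at [u] costs a return trip from [T], and visiting [w]
   before reaching [T] already cost about [dP u + 1 - u]. *)
Lemma cr_ge_pickup_at_T t (M : R) : 0 <= t -> t < 1 ->
  M <= (s1 + 2 - 2 * t) / Opt P t ->
  (forall u, 0 <= u -> u <= t -> M <= (dP u + 1 - u + 2 * (1 - u)) / Opt P u) ->
  (M%:E <= cr P A)%E.
Proof.
move=> t0 t1 M_t M_u.
have [vis_t|unvis_t] := pselect (visited t); last first.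
  by apply: le_trans (cr_ge_unvisited t0 t1 unvis_t); rewrite lee_fin.
apply/lee_subgt0Pr => e e0; rewrite -EFinB.
pose V := [set w | (0 <= w <= 1) /\ visited w].
have e2 : 0 < e / 2 by rewrite divr_gt0.
have [|||u [w [/andP[u0 ut] notVu [/andP[_ w1] vis_w] /andP[uw wu]]]] :=
  @exists_notin_near _ V t (e / 2) e2.
- by move=> w [/andP[]].
- by case=> _; exact: unvisited_origin.
- by split=> //; rewrite t0 ltW.
have unvis_u : ~ visited u by move=> vis_u; apply: notVu; split=> //; rewrite u0; lra.
apply: le_trans (cr_ge_unvisited u0 (le_lt_trans ut t1) unvis_u); rewrite lee_fin.
have K_le : dP u + 1 - u - e <= s1.
  have := visited_before_T vis_w w1; have := dP_lipschitz x y w u.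
  by rewrite distrC ger0_norm ?subr_ge0; lra.
have := M_u u u0 ut; set O := Opt P u => M_le.
have O1 : 1 <= O := Opt_ge1 P u; have O0 : 0 < O := Opt_gt0 P u.
have : (dP u + 1 - u + 2 * (1 - u)) / O - e / O <= (s1 + 2 - 2 * u) / O.
  by rewrite -mulrBl ler_wpM2r ?invr_ge0 ?(ltW O0) //; lra.
have : e / O <= e by rewrite ler_pdivrMr //; nra.
lra.
Qed.

End PickupAtT.

(* The finisher is at [(s1, 0)] at time [s1] but cannot reach [(t, 0)] by time
   [t] (as [t < dP t]), so it has to come back from [(s1, 0)] to [(t, 0)]. *)
Lemma cr_ge_intercept t : s1 < 1 -> 0 <= t -> t < dP t -> t < s1 ->
  (((2 * s1 + 1 - 2 * t) / Opt P t)%:E <= cr P A)%E.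
Proof.
move=> s1_lt1 t0 t_lt ts1; have [s10 _ _] := pick1.
apply: cr_ge_search => [|s pick]; first by rewrite t0 ltW // (lt_trans ts1).
have [s0 _ _] := pick.
have ts : t <= s.
  rewrite leNgt; apply/negP => st.
  by have := pickup_early pick1 pick (ltW (lt_trans ts1 s1_lt1)) st; lra.
have gs := pickup_after pick ts.
have s_ge : 2 * s1 - t <= s.
  have := unit_speed_search s10 s0.
  rewrite gs (pickup_before pick1 (ltW s1_lt1)) dist_axis.
  rewrite (ger0_norm (_ : 0 <= s1 - t)) ?subr_ge0 ?(ltW ts1) //.
  have [s_le lip|s_gt lip] := lerP s s1; last lra.
  by have := dist_search s0; rewrite gs -/(dP t); lra.
by rewrite gs dist_axis distrC ger0_norm; lra.
Qed.

End LowerBounds.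

Section Algorithms.
Variables (R : realType) (x y : R).
Implicit Types (p q z o : pt R) (s t : R).
Local Notation P := ((x, y) : pt R).
Local Notation S := (ptS R).
Local Notation T := (ptT R).
Local Notation dP := (dP x y).

Lemma leg2_first_le p q z o s : 0 <= s -> s <= dist p q ->
  s + dist (leg2 p q z s) o <= dist p q + dist q o.
Proof.
move=> s0 s_le; rewrite leg2_le //.
by have := dist_seg_end s0 s_le; have := dist_triangle (seg p q s) q o; lra.
Qed.

Lemma leg2_second_le p q z o s : dist p q <= s ->
  s + dist (leg2 p q z s) o <= 2 * s - dist p q + dist q o.
Proof.
move=> s_ge; rewrite leg2_ge //; set r := s - dist p q.
have := @dist_seg_start _ q z r; rewrite subr_ge0 (distC q (seg q z r)) => /(_ s_ge).
by have := dist_triangle (seg q z r) q o; rewrite /r; lra.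
Qed.

Lemma dist_PS : dist P S = dP 0.
Proof. by []. Qed.

Lemma dist_PT : dist P T = dP 1.
Proof. by []. Qed.

Lemma dist_ST : dist S T = 1.
Proof. by rewrite dist_axis sub0r normrN normr1. Qed.

Lemma seg_ST t : t <= 1 -> seg S T t = (t, 0).
Proof. by move=> t1; rewrite /seg dist_ST t1 invr1 /=; congr (_, _); ring. Qed.

Lemma seg_TS t : t <= 1 -> seg T S t = (1 - t, 0).
Proof.
by move=> t1; rewrite /seg distC dist_ST t1 invr1 /=; congr (_, _); ring.
Qed.

Lemma delivery_alg0_le t : 0 <= t -> t <= 1 ->
  (delivery (alg0 P) t <= (dP 0 + 1)%:E)%E.
Proof.
move=> t0 t1; have dP0 := dP_ge0 x y 0.
have g_after s : dP 0 <= s -> s <= dP 0 + 1 -> leg2 P S T s = (s - dP 0, 0).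
  by move=> s_ge s_le; rewrite leg2_ge dist_PS // seg_ST //; lra.
apply: (@delivery_to_T_le _ _ _ (dP 0 + t)); first exact: unit_speed_leg2.
- lra.
- by rewrite g_after ?pkg_ge; [congr (_, _) | lra | lra | lra]; ring.
move=> s s0 s_le; have [s_lt|s_ge] := ltrP s (dP 0).
  have := leg2_first_le (p := P) (q := S) T T s0.
  by rewrite dist_PS dist_ST => /(_ (ltW s_lt)).
rewrite g_after ?dist_axis; try lra.
by rewrite distrC ger0_norm; lra.
Qed.

Lemma delivery_alg1_le t : 1 <= dP 1 -> 0 <= t -> t <= 1 ->
  (delivery (alg1 P) t <= (dP 1 + 2 - 2 * t)%:E)%E.
Proof.
move=> dP1 t0 t1.
apply: (@delivery_to_T_le _ _ _ (dP 1 + 1 - t)); first exact: unit_speed_leg2.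
- lra.
- rewrite leg2_ge dist_PT; last lra.
  by rewrite seg_TS ?pkg_ge; [congr (_, _); ring | lra | lra].
move=> s s0 s_le; have [s_lt|s_ge] := ltrP s (dP 1).
  have := leg2_first_le (p := P) (q := T) S T s0.
  by rewrite dist_PT dist_xx => /(_ (ltW s_lt)); lra.
have := leg2_second_le (p := P) (q := T) S T.
by rewrite dist_PT dist_xx => /(_ _ s_ge); lra.
Qed.

Lemma cr_alg0_le : (cr P (alg0 P) <= ((dP 0 + 1) / Opt P 1)%:E)%E.
Proof.
apply: cr_le => t /andP[t0 t1]; exists (dP 0 + 1); first exact: delivery_alg0_le.
rewrite lee_fin ler_pdivrMr ?Opt_gt0 // mulrAC ler_pdivlMr ?Opt_gt0 //.
by rewrite ler_wpM2l ?Opt_ge_Opt1 // addr_ge0 ?dP_ge0.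
Qed.

Section Near.
Hypotheses (P_neq0 : P != (0, 0)) (P_near : (x - 1) ^+ 2 + y ^+ 2 <= 1).
Local Notation d := (dpoint P).
Local Notation Q := ((d, 0) : pt R).

Lemma dist_P_dpoint : dist P Q = d.
Proof. exact: dP_dpoint. Qed.

Lemma dist_dpoint_T : dist Q T = 1 - d.
Proof. by rewrite dist_axis distrC ger0_norm // subr_ge0 dpoint_le1. Qed.

Lemma delivery_algd_le_late t : d <= t -> (delivery (algd P) t <= 1%:E)%E.
Proof.
move=> dt; have d0 := dpoint_gt0 P_neq0 P_near.
apply: (@delivery_to_T_le _ _ _ d); first exact: unit_speed_leg2.
- exact: ltW.
- rewrite leg2_le; last by rewrite dist_P_dpoint.
  by rewrite -[X in seg _ _ X]dist_P_dpoint seg_dist pkg_le.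
move=> s s0 s_le; have := leg2_first_le (p := P) (q := Q) S T s0.
by rewrite dist_P_dpoint dist_dpoint_T => /(_ s_le); lra.
Qed.

Lemma delivery_algd_le_early t : 0 <= t -> t < d ->
  (delivery (algd P) t <= (2 * d + 1 - 2 * t)%:E)%E.
Proof.
move=> t0 td; have d0 := dpoint_gt0 P_neq0 P_near; have d1 := dpoint_le1 P_neq0 P_near.
have dist_QS : dist Q S = d by rewrite dist_axis subr0 gtr0_norm.
apply: (@delivery_to_T_le _ _ _ (2 * d - t)); first exact: unit_speed_leg2.
- lra.
- rewrite leg2_ge dist_P_dpoint; last lra.
  rewrite /seg dist_QS ifT; last lra.
  rewrite pkg_ge /=; last lra.
  by congr (_, _); [field; rewrite gt_eqF | ring].
have first_leg := leg2_first_le (p := P) (q := Q) S T.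
have second_leg := leg2_second_le (p := P) (q := Q) S T.
rewrite dist_P_dpoint dist_dpoint_T in first_leg second_leg.
move=> s s0 s_le; have [s_lt|s_ge] := ltrP s d.
  by have := first_leg _ s0 (ltW s_lt); lra.
by have := second_leg _ s_ge; lra.
Qed.

End Near.
End Algorithms.

Section Optimality.
Variables (R : realType) (x y : R) (A : online_alg R).
Hypothesis A_valid : valid_alg (x, y) A.
Local Notation P := ((x, y) : pt R).
Local Notation g := (search A).
Local Notation dP := (dP x y).

Lemma fast_pickup_of_cr_lt : (cr P A < ((dP 0 + 1) / Opt P 1)%:E)%E ->
  exists2 s1, is_pickup g 1 s1 & s1 < dP 0 + 1.
Proof.
move=> lt_cr; have : (delivery A 1 < (dP 0 + 1)%:E)%E.
  rewrite ltNge; apply/negP => le_del.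
  have t01 : 0 <= (1 : R) <= 1 by rewrite ler01 lexx.
  by have := lt_le_trans lt_cr (cr_ge P t01 le_del); rewrite ltxx.
move=> /ereal_inf_lt[_ [s1 [r [pick r0 _ ->]]]]; rewrite lte_fin => lt_del.
by exists s1 => //; lra.
Qed.

Section FastPickup.
Variable s1 : R.
Hypotheses (pick1 : is_pickup g 1 s1) (fast : s1 < dP 0 + 1).

Lemma cr_alg1_le_far : 1 < (x - 1) ^+ 2 + y ^+ 2 -> (cr P (alg1 P) <= cr P A)%E.
Proof.
move=> P_far; have [s10 _ _] := pick1.
have s1_ge1 : 1 <= s1.
  rewrite leNgt; apply/negP => s1_lt1.
  have := dist_search A_valid s10; rewrite (pickup_before pick1 (ltW s1_lt1)).
  by have := lt_dP_far P_far s10 (ltW s1_lt1); rewrite /dP; lra.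
have atT : g s1 = ptT R := pickup_after pick1 s1_ge1.
have dP1_le : dP 1 <= s1 by have := dist_search A_valid s10; rewrite atT.
have dP1_gt1 := dP1_gt1_far P_far.
apply: cr_le => t /andP[t0 t1]; exists (dP 1 + 2 - 2 * t).
  by apply: delivery_alg1_le => //; exact: ltW.
have [->|t_neq1] := eqVneq t 1.
  rewrite mulr1 addrK Opt1 max_r ?(ltW dP1_gt1) // divff ?gt_eqF ?(lt_trans ltr01) //.
  exact: cr_ge1 A_valid.
have t_lt1 : t < 1 by rewrite lt_neqAle t_neq1.
apply: (cr_ge_pickup_at_T A_valid pick1 atT fast t0 t_lt1).
  by rewrite ler_pM2r ?invr_gt0 ?Opt_gt0 //; lra.
by move=> u u0 ut; exact: ratio_le_far.
Qed.

Lemma cr_algd_le_near : P != (0, 0) -> (x - 1) ^+ 2 + y ^+ 2 <= 1 ->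
  (cr P (algd P) <= cr P A)%E.
Proof.
move=> P_neq0 P_near; have [s10 _ _] := pick1.
have d1 := dpoint_le1 P_neq0 P_near.
apply: cr_le => t /andP[t0 t1]; have [dt|td] := lerP (dpoint P) t.
  exists 1; first exact: delivery_algd_le_late.
  apply: le_trans (cr_ge1 A_valid).
  by rewrite lee_fin ler_pdivrMr ?Opt_gt0 // mul1r Opt_ge1.
exists (2 * dpoint P + 1 - 2 * t); first exact: delivery_algd_le_early.
have [s1_ge1|s1_lt1] := lerP 1 s1.
  have atT : g s1 = ptT R := pickup_after pick1 s1_ge1.
  apply: (cr_ge_pickup_at_T A_valid pick1 atT fast t0 (lt_le_trans td d1)).
  - by rewrite ler_pM2r ?invr_gt0 ?Opt_gt0 //; lra.
  - by move=> u u0 ut; exact: ratio_le_near.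
have d_le : dpoint P <= s1.
  apply: (dpoint_le_near P_neq0 P_near s10).
  by have := dist_search A_valid s10; rewrite (pickup_before pick1 (ltW s1_lt1)).
have tD := lt_dP_near P_neq0 P_near t0 td.
apply: le_trans (cr_ge_intercept A_valid pick1 s1_lt1 t0 tD (lt_le_trans td d_le)).
by rewrite lee_fin ler_pM2r ?invr_gt0 ?Opt_gt0 //; lra.
Qed.

End FastPickup.
End Optimality.

Section Hybrid.
Variables (R : realType) (x y : R).
Local Notation P := ((x, y) : pt R).

Lemma cr_hybrid_le_alg0 : (cr P (hybrid P) <= cr P (alg0 P))%E.
Proof.
by rewrite /hybrid; do 2 case: ifP => //; move/negbT; rewrite -ltNge => /ltW.
Qed.

Lemma cr_hybrid_le_alg1 : 1 < (x - 1) ^+ 2 + y ^+ 2 ->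
  (cr P (hybrid P) <= cr P (alg1 P))%E.
Proof. by move=> P_far; rewrite /hybrid P_far; case: ifP. Qed.

Lemma cr_hybrid_le_algd : (x - 1) ^+ 2 + y ^+ 2 <= 1 ->
  (cr P (hybrid P) <= cr P (algd P))%E.
Proof. by move=> P_near; rewrite /hybrid ltNge P_near; case: ifP. Qed.

End Hybrid.

Theorem theorem4 (R : realType) (x y : R) :
  0 <= y -> (x, y) != (0, 0) ->
  forall A : online_alg R, valid_alg (x, y) A ->
  (cr (x, y) (hybrid (x, y)) <= cr (x, y) A)%E.
Proof.
(* The problem is symmetric under [y |-> -y]. *)
move=> _ P_neq0 A A_valid.
have [alg0_ok|A_better] := leP ((dP x y 0 + 1) / Opt (x, y) 1)%:E (cr (x, y) A).
  exact: le_trans (cr_hybrid_le_alg0 x y) (le_trans (cr_alg0_le x y) alg0_ok).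
have [s1 pick1 fast] := fast_pickup_of_cr_lt A_better.
have [P_far|P_near] := ltrP 1 ((x - 1) ^+ 2 + y ^+ 2).
  exact: le_trans (cr_hybrid_le_alg1 P_far)
                  (cr_alg1_le_far A_valid pick1 fast P_far).
exact: le_trans (cr_hybrid_le_algd P_near)
                (cr_algd_le_near A_valid pick1 fast P_neq0 P_near).
Qed.
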